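(* (i) Let $W$ be a real entanglement witness on $\mathbb{C}^m\otimes\mathbb{C}^n$. If $W$ detects an entangled state $\rho$ (i.e. $\mathrm{tr}(W\rho)<0$), then $W$ also detects $\rho^*$ and $\rho^+$. Conversely, if a real entangled state $\rho$ is detected by an entanglement witness $W$, then $\rho$ is also detected by the two entanglement witnesses $W^*$ and $W^+$. (ii) An entangled state $\rho$ on $\mathbb{C}^m\otimes\mathbb{C}^n$ is detected by some real entanglement witness if and only if $\rho^+$ is a real entangled state.
   Context: An entanglement witness (EW) on $\mathbb{C}^m\otimes\mathbb{C}^n$ is a Hermitian matrix $W$ such that $\mathrm{tr}(W\sigma)\ge 0$ for every separable state $\sigma$ and $\mathrm{tr}(W\sigma)<0$ for at least one entangled state $\sigma$; $W$ detects a state $\rho$ if $\mathrm{tr}(W\rho)<0$. A real EW is an EW whose matrix (in the computational product basis) has real entries; a real state is a state whose density matrix has real entries. Separability/entanglement always refers to the standard definition over the complex Hilbert space. For a Hermitian $H$, $H^*$ is its entrywise complex conjugate and $H^+:=\frac12(H+H^* )$ is its real part. *)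

(* Kronecker product: mathcomp-real-closed's mxtens (A *t B), whose index
   convention (i1,i2) |-> i1*n + i2 is the computational product basis. *)
From HB Require Import structures.
From mathcomp Require Import all_boot all_order all_algebra.
From mathcomp Require Import reals.
From mathcomp Require Import complex mxtens.
Set Implicit Arguments.
Unset Strict Implicit.
Unset Printing Implicit Defensive.
Import Order.TTheory GRing.Theory Num.Theory.
Local Open Scope ring_scope.

Section QInfo.
Variable R : realType.
Local Notation C := (R[i]).

Definition mxconj {p q : nat} (A : 'M[C]_(p, q)) : 'M[C]_(p, q) :=
  map_mx (fun z => Num.conj z) A.

Definition adj {p q : nat} (A : 'M[C]_(p, q)) : 'M[C]_(q, p) := (mxconj A)^T.

Definition mxrealpart {p : nat} (A : 'M[C]_p) : 'M[C]_p :=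
  (2%:R)^-1 *: (A + mxconj A).

Definition hermitian {p : nat} (A : 'M[C]_p) : Prop := adj A = A.

(* positive semidefinite: v^dagger A v >= 0 for every complex vector v
   (the order on C forces the value to be real) *)
Definition psd {p : nat} (A : 'M[C]_p) : Prop :=
  hermitian A /\ forall v : 'cV[C]_p, 0 <= (adj v *m A *m v) 0 0.

Definition state {p : nat} (A : 'M[C]_p) : Prop := psd A /\ \tr A = 1.

Definition real_mx {p q : nat} (A : 'M[C]_(p, q)) : Prop :=
  forall i j, A i j \is Num.real.

Definition separable (m n : nat) (s : 'M[C]_(m * n)) : Prop :=
  exists (K : nat) (w : 'I_K -> C) (A : 'I_K -> 'M[C]_m) (B : 'I_K -> 'M[C]_n),
    [/\ forall k, 0 <= w k,
        \sum_(k < K) w k = 1,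
        forall k, state (A k),
        forall k, state (B k) &
        s = \sum_(k < K) w k *: (A k *t B k)].

Definition entangled (m n : nat) (s : 'M[C]_(m * n)) : Prop :=
  state s /\ ~ separable s.

Definition detects {p : nat} (W rho : 'M[C]_p) : Prop := \tr (W *m rho) < 0.

Definition EW (m n : nat) (W : 'M[C]_(m * n)) : Prop :=
  [/\ hermitian W,
      forall s : 'M[C]_(m * n), separable s -> 0 <= \tr (W *m s) &
      exists s : 'M[C]_(m * n), entangled s /\ detects W s].

Definition real_EW (m n : nat) (W : 'M[C]_(m * n)) : Prop :=
  EW W /\ real_mx W.

End QInfo.

(* Entrywise conjugation is a ring morphism on matrices that maps states to
   states and product states to product states, and conjugating both W and
   rho conjugates tr (W rho).  Hence a real witness detecting rho also detects
   rho^* and rho^+, and the real part W^+ of a witness W is again nonnegative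
   on separable states; this gives (i) and one half of (ii).
   For the other half we separate the entangled real state rho^+ from the
   separable states.  By Caratheodory, every separable state is a mixture of
   2(mn)^2 + 1 product states, so the separable states are the continuous
   image of a compact set of parameters and contain a state x nearest to
   sigma := rho^+ in Hilbert-Schmidt distance.  The variational inequality at
   x makes W = (x - sigma) - tr ((x - sigma) x) 1 nonnegative on separable
   states, while tr (W sigma) = - |x - sigma|^2 < 0.  Since sigma is real,
   W^+ detects sigma, and tr (W^+ rho^+) = tr (W^+ rho) for the real W^+. *)

From HB Require Import structures.
From mathcomp Require Import all_boot all_order all_algebra.
From mathcomp Require Import reals.
From mathcomp Require Import complex mxtens.
From mathcomp Require Import boolp classical_sets topology normedtype derive.
From mathcomp Require Import ring lra.
(* Imported last, so that [hermitian] is the one of Defs, not of sesquilinear. *)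
From Pilot Require Import Defs.
Import Order.TTheory GRing.Theory Num.Theory.
Import numFieldNormedType.Exports.
Set Implicit Arguments.
Unset Strict Implicit.
Unset Printing Implicit Defensive.
Local Open Scope classical_set_scope.
Local Open Scope ring_scope.

Lemma mxtrace_tens (T : comPzRingType) p q (A : 'M[T]_p) (B : 'M[T]_q) :
  \tr (A *t B) = \tr A * \tr B.
Proof. by rewrite /mxtrace mulr_sum; apply: eq_bigr => i _; rewrite mxE. Qed.

Section Conjugation.
Variable R : realType.
Local Notation C := (R[i]).
Implicit Types (p q : nat).

Lemma mxconjD p q (A B : 'M[C]_(p, q)) : mxconj (A + B) = mxconj A + mxconj B.
Proof. exact: map_mxD. Qed.

Lemma mxconjZ p q a (A : 'M[C]_(p, q)) : mxconj (a *: A) = a^* *: mxconj A.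
Proof. exact: map_mxZ. Qed.

Lemma mxconjM p q r (A : 'M[C]_(p, q)) (B : 'M[C]_(q, r)) :
  mxconj (A *m B) = mxconj A *m mxconj B.
Proof. exact: map_mxM. Qed.

Lemma mxconj_sum p q (I : finType) (F : I -> 'M[C]_(p, q)) :
  mxconj (\sum_i F i) = \sum_i mxconj (F i).
Proof. exact: map_mx_sum. Qed.

Lemma mxconjT p q r s (A : 'M[C]_(p, q)) (B : 'M[C]_(r, s)) :
  mxconj (A *t B) = mxconj A *t mxconj B.
Proof. exact: map_mxT. Qed.

Lemma mxconjK p q : involutive (@mxconj R p q).
Proof. by move=> A; apply/matrixP=> i j; rewrite !mxE conjCK. Qed.

Lemma mxconj_trmx p q (A : 'M[C]_(p, q)) : mxconj A^T = (mxconj A)^T.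
Proof. exact/esym/map_trmx. Qed.

Lemma mxtrace_conj p (A : 'M[C]_p) : \tr (mxconj A) = (\tr A)^*.
Proof. exact: trace_map_mx. Qed.

Lemma mxconj_real p q (A : 'M[C]_(p, q)) : real_mx A -> mxconj A = A.
Proof. by move=> rA; apply/matrixP=> i j; rewrite mxE conj_Creal. Qed.

Lemma real_mx_realpart p (A : 'M[C]_p) : real_mx (mxrealpart A).
Proof.
move=> i j; apply/CrealP.
by rewrite !mxE rmorphM rmorphD /= conjCK conj_Creal ?rpredV ?rpred_nat // addrC.
Qed.

Lemma adjD p q (A B : 'M[C]_(p, q)) : adj (A + B) = adj A + adj B.
Proof. by rewrite /adj mxconjD linearD. Qed.

Lemma adjZ p q a (A : 'M[C]_(p, q)) : adj (a *: A) = a^* *: adj A.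
Proof. by rewrite /adj mxconjZ linearZ. Qed.

Lemma hermitian_conj_trmx p (A : 'M[C]_p) : hermitian A -> mxconj A = A^T.
Proof. by move=> hA; rewrite -[in LHS]hA /adj mxconj_trmx mxconjK. Qed.

Lemma hermitian_entry p (A : 'M[C]_p) i j : hermitian A -> A j i = (A i j)^*.
Proof. by move=> hA; rewrite -[in LHS]hA !mxE. Qed.

Lemma hermitian_conj p (A : 'M[C]_p) : hermitian A -> hermitian (mxconj A).
Proof. by move=> hA; rewrite /hermitian /adj mxconjK hermitian_conj_trmx ?trmxK. Qed.

Lemma hermitianD p (A B : 'M[C]_p) :
  hermitian A -> hermitian B -> hermitian (A + B).
Proof. by rewrite /hermitian adjD => -> ->. Qed.

Lemma hermitianZ p a (A : 'M[C]_p) :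
  a \is Num.real -> hermitian A -> hermitian (a *: A).
Proof. by move=> /conj_Creal ra; rewrite /hermitian adjZ ra => ->. Qed.

Lemma hermitianN p (A : 'M[C]_p) : hermitian A -> hermitian (- A).
Proof. by rewrite -scaleN1r; apply: hermitianZ; rewrite rpredN1. Qed.

Lemma hermitianB p (A B : 'M[C]_p) :
  hermitian A -> hermitian B -> hermitian (A - B).
Proof. by move=> hA /hermitianN; apply: hermitianD. Qed.

Lemma hermitian1 p : hermitian (1%:M : 'M[C]_p).
Proof. by apply/matrixP=> i j; rewrite !mxE conjC_nat eq_sym. Qed.

Lemma hermitian_sum p (I : finType) (F : I -> 'M[C]_p) :
  (forall i, hermitian (F i)) -> hermitian (\sum_i F i).
Proof.
by move=> hF; rewrite /hermitian /adj mxconj_sum linear_sum; apply: eq_bigr => i _; apply: hF.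
Qed.

Lemma hermitianT p q (A : 'M[C]_p) (B : 'M[C]_q) :
  hermitian A -> hermitian B -> hermitian (A *t B).
Proof. by rewrite /hermitian /adj mxconjT trmx_tens => -> ->. Qed.

Lemma mxtrace_mul_hermitian_real p (A B : 'M[C]_p) :
  hermitian A -> hermitian B -> \tr (A *m B) \is Num.real.
Proof.
move=> hA hB; apply/CrealP.
rewrite -mxtrace_conj mxconjM !hermitian_conj_trmx //.
by rewrite -trmx_mul mxtrace_tr mxtrace_mulC.
Qed.

Lemma mxtrace_mul_self_hermitian p (A : 'M[C]_p) : hermitian A ->
  \tr (A *m A) = \sum_i \sum_j `|A i j| ^+ 2.
Proof.
move=> hA; apply: eq_bigr => i _; rewrite mxE; apply: eq_bigr => j _.
by rewrite (hermitian_entry i j hA) normCK.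
Qed.

Lemma mxtrace_mul_self_ge0 p (A : 'M[C]_p) : hermitian A -> 0 <= \tr (A *m A).
Proof.
move=> hA; rewrite mxtrace_mul_self_hermitian // sumr_ge0 // => i _.
by rewrite sumr_ge0 // => j _; rewrite exprn_ge0.
Qed.

Lemma mxtrace_mul_self_gt0 p (A : 'M[C]_p) : hermitian A -> A != 0 ->
  0 < \tr (A *m A).
Proof.
move=> hA; apply: contraNT; rewrite mxtrace_mul_self_hermitian // -real_leNgt ?rpred0 //.
  move=> le0; apply/eqP/matrixP => i j; rewrite mxE; apply/eqP.
  rewrite -normr_eq0 -sqrf_eq0 eq_le exprn_ge0 // andbT.
  apply: le_trans le0; rewrite (bigD1 i) //= (bigD1 j) //= -addrA lerDl.
  by rewrite addr_ge0 // sumr_ge0 // => *; rewrite ?sumr_ge0 // => *; rewrite exprn_ge0.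
by rewrite rpred_sum // => i _; rewrite rpred_sum // => j _; rewrite realX // normr_real.
Qed.

Lemma psdD p (A B : 'M[C]_p) : psd A -> psd B -> psd (A + B).
Proof.
move=> [hA pA] [hB pB]; split; first exact: hermitianD.
by move=> v; rewrite mulmxDr mulmxDl mxE addr_ge0.
Qed.

Lemma psdZ p a (A : 'M[C]_p) : 0 <= a -> psd A -> psd (a *: A).
Proof.
move=> a0 [hA pA]; split; first by apply: hermitianZ; rewrite ?ger0_real.
by move=> v; rewrite -scalemxAr -scalemxAl mxE mulr_ge0.
Qed.

Lemma state_conj p (A : 'M[C]_p) : state A -> state (mxconj A).
Proof.
move=> [[hA pA] tA]; split; last by rewrite mxtrace_conj tA conjC1.
split=> [|v]; first exact: hermitian_conj.
rewrite -conjC_ge0.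
have -> : ((adj v *m mxconj A *m v) 0 0)^* = mxconj (adj v *m mxconj A *m v) 0 0.
  by rewrite /mxconj [RHS]mxE.
by rewrite !mxconjM mxconjK /adj mxconj_trmx; apply: pA.
Qed.

Lemma state_realpart p (A : 'M[C]_p) : state A -> state (mxrealpart A).
Proof.
move=> sA; have [pA tA] := sA; have [pA' tA'] := state_conj sA.
split; first by apply: psdZ (psdD pA pA'); rewrite invr_ge0 ler0n.
by rewrite mxtraceZ mxtraceD tA tA' mulVf ?pnatr_eq0.
Qed.

Lemma mxtrace_conj_mull p (A B : 'M[C]_p) :
  \tr (mxconj A *m B) = (\tr (A *m mxconj B))^*.
Proof. by rewrite -mxtrace_conj mxconjM mxconjK. Qed.

Lemma mxtrace_realpart_mull p (A B : 'M[C]_p) :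
  \tr (mxrealpart A *m B) = 2^-1 * (\tr (A *m B) + \tr (mxconj A *m B)).
Proof. by rewrite -scalemxAl mxtraceZ mulmxDl mxtraceD. Qed.

Lemma mxtrace_realpart_mulr p (A B : 'M[C]_p) :
  \tr (A *m mxrealpart B) = 2^-1 * (\tr (A *m B) + \tr (A *m mxconj B)).
Proof. by rewrite -scalemxAr mxtraceZ mulmxDr mxtraceD. Qed.

End Conjugation.

Section StateEntries.
Variables (R : realType) (p : nat).
Local Notation C := (R[i]).
Local Notation Re := (@complex.Re R).
Local Notation Im := (@complex.Im R).
Local Notation e i := (delta_mx i 0 : 'cV[C]_p).

Lemma adj_delta i : adj (e i) = delta_mx 0 i.
Proof.
by apply/matrixP=> a b; rewrite !mxE; case: eqP; case: eqP; rewrite ?conjC0 ?conjC1.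
Qed.

Lemma form_delta (A : 'M[C]_p) i j : (adj (e i) *m A *m e j) 0 0 = A i j.
Proof. by rewrite adj_delta -rowE -colE !mxE. Qed.

Lemma form_delta_add (A : 'M[C]_p) i j (c : C) :
  let u := e i + c *: e j in
  (adj u *m A *m u) 0 0 = A i i + c * A i j + c^* * A j i + c^* * c * A j j.
Proof.
have entryD (M N : 'M[C]_1) : (M + N) 0 0 = M 0 0 + N 0 0 by rewrite mxE.
have entryZ a (M : 'M[C]_1) : (a *: M) 0 0 = a * M 0 0 by rewrite mxE.
rewrite /= adjD adjZ !mulmxDl !mulmxDr -!scalemxAl -!scalemxAr.
by rewrite !entryD !entryZ !form_delta !mulrA !addrA.
Qed.

Lemma state_entry_bound (A : 'M[C]_p) i j : state A ->
  -1 <= Re (A i j) <= 1 /\ -1 <= Im (A i j) <= 1.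
Proof.
move=> [[hA pA] tA].
have diag_ge0 k : 0 <= Re (A k k).
  by have := pA (e k); rewrite form_delta lecE => /andP[].
have diag_le1 k : Re (A k k) <= 1.
  have : Re (\tr A) = 1 by rewrite tA.
  by rewrite /mxtrace raddf_sum (bigD1 k) //= => <-; rewrite lerDl sumr_ge0.
have form_ge0 c : `|c| = 1 ->
    0 <= Re (A i i) + Re (A j j) + Re (c * A i j + c^* * (A i j)^*).
  move=> c1; have := pA (e i + c *: e j).
  rewrite form_delta_add -normCKC c1 expr1n mul1r (hermitian_entry i j hA) lecE => /andP[_].
  by rewrite !raddfD /=; lra.
have := form_ge0 1 (normr1 _); have := form_ge0 (-1) (normrN1 _).
have := form_ge0 'i (normCi _); have := form_ge0 (- 'i) (etrans (normrN _) (normCi _)).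
have := diag_ge0 i; have := diag_ge0 j; have := diag_le1 i; have := diag_le1 j.
by case: (A i j) => x y /=; lra.
Qed.

End StateEntries.

Section Witnesses.
Variables (R : realType) (m n : nat).
Local Notation C := (R[i]).
Local Notation M := 'M[C]_(m * n).

Definition block_positive (W : M) :=
  hermitian W /\ forall s : M, separable s -> 0 <= \tr (W *m s).

Lemma EW_block_positive (W : M) : EW W -> block_positive W.
Proof. by case. Qed.

Lemma block_positive_EW (W s : M) :
  block_positive W -> entangled s -> detects W s -> EW W.
Proof. by move=> [hW pW] es dW; split=> //; exists s. Qed.

Lemma separable_conj (s : M) : separable s -> separable (mxconj s).
Proof.
move=> [K [w [A [B [w0 w1 sA sB ->]]]]].
exists K, w, (fun k => mxconj (A k)), (fun k => mxconj (B k)).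
split=> // [k|k|]; try exact: state_conj.
rewrite mxconj_sum; apply: eq_bigr => k _.
by rewrite mxconjZ mxconjT conj_Creal ?ger0_real.
Qed.

Lemma separable_hermitian (s : M) : separable s -> hermitian s.
Proof.
move=> [K [w [A [B [w0 _ sA sB ->]]]]].
apply: hermitian_sum => k; apply: hermitianZ; first exact: ger0_real.
by apply: hermitianT; [case: (sA k) => -[]|case: (sB k) => -[]].
Qed.

Lemma separable_trace (s : M) : separable s -> \tr s = 1.
Proof.
move=> [K [w [A [B [_ w1 sA sB ->]]]]]; rewrite raddf_sum /= -[RHS]w1.
apply: eq_bigr => k _.
by rewrite mxtraceZ mxtrace_tens (proj2 (sA k)) (proj2 (sB k)) !mulr1.
Qed.

Lemma block_positive_conj (W : M) : block_positive W -> block_positive (mxconj W).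
Proof.
move=> [hW pW]; split; first exact: hermitian_conj.
by move=> s /separable_conj ss; rewrite mxtrace_conj_mull conjC_ge0 pW.
Qed.

Lemma block_positive_realpart (W : M) :
  block_positive W -> block_positive (mxrealpart W).
Proof.
move=> bW; have [hW pW] := bW; have [hW' pW'] := block_positive_conj bW.
split; first by apply: hermitianZ (hermitianD hW hW'); rewrite rpredV rpred_nat.
move=> s ss; rewrite mxtrace_realpart_mull.
by rewrite mulr_ge0 ?addr_ge0 ?pW ?pW' // invr_ge0 ler0n.
Qed.

End Witnesses.

Section Detection.
Variables (R : realType) (p : nat).
Local Notation C := (R[i]).
Implicit Types W rho : 'M[C]_p.

Lemma mean_lt0 (a b : C) : a < 0 -> b < 0 -> 2^-1 * (a + b) < 0.
Proof. by move=> a0 b0; rewrite pmulr_rlt0 ?invr_gt0 ?ltr0n // ltr_nDl. Qed.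

Lemma detects_conj W rho : detects W rho -> detects (mxconj W) (mxconj rho).
Proof.
rewrite /detects -mxconjM mxtrace_conj => dW.
by rewrite conj_Creal ?ltr0_real.
Qed.

Lemma detects_realpartl W rho :
  detects W rho -> detects (mxconj W) rho -> detects (mxrealpart W) rho.
Proof. by rewrite /detects mxtrace_realpart_mull; apply: mean_lt0. Qed.

Lemma detects_realpartr W rho :
  detects W rho -> detects W (mxconj rho) -> detects W (mxrealpart rho).
Proof. by rewrite /detects mxtrace_realpart_mulr; apply: mean_lt0. Qed.

Lemma mxtrace_mul_realpart W rho : real_mx W -> hermitian W -> hermitian rho ->
  \tr (W *m mxrealpart rho) = \tr (W *m rho).
Proof.
move=> rW hW hrho; rewrite mxtrace_realpart_mulr -[X in X *m mxconj _](mxconj_real rW).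
rewrite -mxconjM mxtrace_conj conj_Creal ?mxtrace_mul_hermitian_real //.
by rewrite -mulr2n -[X in _ * X]mulr_natl mulKf ?pnatr_eq0.
Qed.

End Detection.

Section Caratheodory.
Variables (R : realType) (p q : nat).
Local Notation C := (R[i]).

Lemma affine_dependence K (P : 'I_K.+1 -> 'M[C]_(p, q)) : (2 * (p * q) < K)%N ->
  exists mu : 'I_K.+1 -> R, [/\ exists k, 0 < mu k, \sum_k mu k = 0 &
    \sum_k (mu k)%:C%C *: P k = 0].
Proof.
move=> large.
(* The rows of [F] are the constant 1 followed by the real coordinates of [P k];
   there are more rows than columns. *)
pose coord k (x : option ('I_p * 'I_q * bool)) : R :=
  if x is Some (i, j, b) then
    if b then complex.Im (P k i j) else complex.Re (P k i j)
  else 1.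
pose F : 'M[R]_(K.+1, #|{: option ('I_p * 'I_q * bool)}|) :=
  \matrix_(k, c) coord k (enum_val c).
have F_dep : ~~ row_free F.
  rewrite -row_leq_rank -ltnNge (leq_ltn_trans (rank_leq_col F)) //.
  by rewrite card_option card_prod card_prod !card_ord card_bool mulnC ltnS.
pose u := nz_row (kermx F); pose mu k := u 0 k.
have u0 : u != 0 by rewrite nz_row_eq0 kermx_eq0.
have muF x : \sum_k mu k * coord k x = 0.
  have /sub_kermxP/(congr1 (fun X : 'rV_ _ => X 0 (enum_rank x))) := nz_row_sub (kermx F).
  rewrite !mxE => uF; rewrite -[RHS]uF.
  by apply: eq_big => // k _; rewrite /F mxE enum_rankK.
have mu_sum : \sum_k mu k = 0.
  by rewrite -[RHS](muF None); apply: eq_bigr => k _; rewrite mulr1.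
exists mu; split=> //.
- apply/existsP; apply: contraR u0 => /existsPn mu_le0.
  have muN_ge0 k : 0 <= - mu k by rewrite oppr_ge0 leNgt mu_le0.
  have /psumr_eq0P muN0 : \sum_k - mu k = 0 by rewrite sumrN mu_sum oppr0.
  apply/eqP/rowP => k; rewrite mxE; apply/eqP.
  by rewrite -oppr_eq0 [- _]muN0.
- apply/matrixP=> i j; rewrite summxE mxE.
  apply/eqP; rewrite eq_complex !raddf_sum /=; apply/andP; split; apply/eqP;
    [rewrite -[RHS](muF (Some (i, j, false))) | rewrite -[RHS](muF (Some (i, j, true)))];
    apply: eq_bigr => k _; rewrite mxE /coord;
    by case: (P k i j) => x y; rewrite /= mul0r ?subr0 ?addr0.
Qed.

Lemma convex_comb_drop K (w : 'I_K.+1 -> R) (P : 'I_K.+1 -> 'M[C]_(p, q)) :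
  (forall k, 0 <= w k) -> (2 * (p * q) < K)%N ->
  exists (j : 'I_K.+1) (w' : 'I_K -> R), [/\ forall k, 0 <= w' k,
    \sum_k w' k = \sum_k w k &
    \sum_k (w' k)%:C%C *: P (lift j k) = \sum_k (w k)%:C%C *: P k].
Proof.
move=> w_ge0 /(affine_dependence P) [mu [[k0 mu_k0] mu_sum muP]].
(* Move the weights along [- mu] until the first one vanishes. *)
have [j mu_j j_min] :=
  arg_minP (fun k => w k / mu k) (mu_k0 : (fun k => 0 < mu k) k0).
pose t := w j / mu j; pose v k := w k - t * mu k.
have t_ge0 : 0 <= t by rewrite divr_ge0 ?w_ge0 ?ltW.
have v_ge0 k : 0 <= v k.
  rewrite subr_ge0; have [mu_k|mu_k] := ltrP 0 (mu k).
    by rewrite -ler_pdivlMr // j_min.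
  by apply: le_trans (w_ge0 k); apply: mulr_ge0_le0.
have v_j : v j = 0 by rewrite /v /t divfK ?subrr ?gt_eqF.
have v_sum : \sum_k v k = \sum_k w k.
  by rewrite sumrB -mulr_sumr mu_sum mulr0 subr0.
have vP : \sum_k (v k)%:C%C *: P k = \sum_k (w k)%:C%C *: P k.
  under eq_bigr => k _ do rewrite rmorphB rmorphM scalerBl -scalerA.
  by rewrite sumrB -scaler_sumr muP scaler0 subr0.
exists j, (fun k => v (lift j k)); split=> //.
  by rewrite -v_sum [RHS](bigD1_ord j) //= v_j add0r.
by rewrite -vP [RHS](bigD1_ord j) //= v_j scale0r add0r.
Qed.

End Caratheodory.

Section ProductMixtures.
Variables (R : realType) (m n : nat).
Local Notation C := (R[i]).
Local Notation N := (m * n)%N.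

Definition product_mixture K (w : 'I_K -> R) (A : 'I_K -> 'M[C]_m)
    (B : 'I_K -> 'M[C]_n) (s : 'M[C]_N) :=
  [/\ forall k, 0 <= w k, \sum_k w k = 1, forall k, state (A k),
      forall k, state (B k) & s = \sum_k (w k)%:C%C *: (A k *t B k)].

(* One more than the real dimension of 'M[C]_N (Caratheodory's bound). *)
Definition mixture_length := (2 * (N * N)).+1.

Lemma separable_mixtureP s :
  separable s <-> exists K w A B, @product_mixture K w A B s.
Proof.
split=> [[K [w [A [B [w_ge0 w_sum sA sB ->]]]]]|[K [w [A [B [w_ge0 w_sum sA sB ->]]]]]].
  have wE k : (complex.Re (w k))%:C%C = w k by rewrite RRe_real ?ger0_real.
  exists K, (fun k => complex.Re (w k)), A, B; split=> //.
  - by move=> k; rewrite -ler0c wE.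
  - by apply: complexI; rewrite rmorph_sum (eq_bigr _ (fun k _ => wE k)) w_sum.
  - by apply: eq_bigr => k _; rewrite wE.
exists K, (fun k => (w k)%:C%C), A, B; split=> //.
- by move=> k; rewrite ler0c.
- by rewrite -rmorph_sum w_sum.
Qed.

Lemma product_mixture_pad K w A B s : @product_mixture K w A B s ->
  exists w' A' B', @product_mixture K.+1 w' A' B' s.
Proof.
case: K w A B => [|K] w A B [w_ge0 w_sum sA sB ->].
  by move: w_sum; rewrite big_ord0 => /eqP; rewrite eq_sym oner_eq0.
pose ext T (f : 'I_K.+1 -> T) x k := if unlift ord_max k is Some k' then f k' else x.
exists (ext _ w 0), (ext _ A (A ord0)), (ext _ B (B ord0)); split.
- by move=> k; rewrite /ext; case: unlift.
- by rewrite (bigD1_ord ord_max) //= /ext unlift_none add0r; under eq_bigr do rewrite liftK.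
- by move=> k; rewrite /ext; case: unlift.
- by move=> k; rewrite /ext; case: unlift.
rewrite [RHS](bigD1_ord ord_max) //= /ext unlift_none scale0r add0r.
by apply: eq_bigr => k _; rewrite !liftK.
Qed.

Lemma product_mixture_drop K w A B s : @product_mixture K.+1 w A B s ->
  (2 * (N * N) < K)%N -> exists w' A' B', @product_mixture K w' A' B' s.
Proof.
move=> [w_ge0 w_sum sA sB ->] /(convex_comb_drop (fun k => A k *t B k) w_ge0).
move=> [j [w' [w'_ge0 w'_sum w'P]]].
exists w', (A \o lift j), (B \o lift j).
by split=> // [|k|k]; [exact: etrans w'_sum w_sum | apply: sA | apply: sB].
Qed.

Lemma product_mixture_widen d K w A B s : @product_mixture K w A B s ->
  exists w' A' B', @product_mixture (K + d) w' A' B' s.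
Proof.
elim: d => [|d IH] in K w A B *; first by rewrite addn0 => mix; exists w, A, B.
by move=> /product_mixture_pad [w' [A' [B' /IH]]]; rewrite addnS.
Qed.

Lemma product_mixture_shrink d w A B s :
  @product_mixture (mixture_length + d) w A B s ->
  exists w' A' B', @product_mixture mixture_length w' A' B' s.
Proof.
elim: d => [|d IH] in w A B *.
  by move: w A B; rewrite addn0 => w A B mix; exists w, A, B.
move: w A B; rewrite addnS => w A B /product_mixture_drop [|w' [A' [B' /IH //]]].
by rewrite /mixture_length addSn ltnS leq_addr.
Qed.

Lemma product_mixture_resize K w A B s : @product_mixture K w A B s ->
  exists w' A' B', @product_mixture mixture_length w' A' B' s.
Proof.
have [le_K|lt_K] := leqP K mixture_length.
  by move=> /(product_mixture_widen (mixture_length - K)); rewrite subnKC.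
by move: w A B; rewrite -(subnKC (ltnW lt_K)) => w A B; apply: product_mixture_shrink.
Qed.

Lemma product_mixture_convex K1 w1 A1 B1 a K2 w2 A2 B2 b (t : R) :
  @product_mixture K1 w1 A1 B1 a -> @product_mixture K2 w2 A2 B2 b -> 0 <= t <= 1 ->
  exists w A B, @product_mixture (K1 + K2) w A B ((1 - t)%:C%C *: a + t%:C%C *: b).
Proof.
move=> [w1_ge0 w1_sum sA1 sB1 ->] [w2_ge0 w2_sum sA2 sB2 ->] /andP[t_ge0 t_le1].
pose glue T (f1 : 'I_K1 -> T) (f2 : 'I_K2 -> T) k :=
  match split k with inl k1 => f1 k1 | inr k2 => f2 k2 end.
have glueL T f1 f2 k : glue T f1 f2 (lshift K2 k) = f1 k by rewrite /glue (unsplitK (inl k)).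
have glueR T f1 f2 k : glue T f1 f2 (rshift K1 k) = f2 k by rewrite /glue (unsplitK (inr k)).
exists (glue _ (fun k => (1 - t) * w1 k) (fun k => t * w2 k)), (glue _ A1 A2), (glue _ B1 B2).
split.
- by move=> k; rewrite /glue; case: split => k'; rewrite mulr_ge0 ?subr_ge0.
- rewrite big_split_ord /=; under eq_bigr do rewrite glueL.
  under [X in _ + X]eq_bigr do rewrite glueR.
  by rewrite -!mulr_sumr w1_sum w2_sum !mulr1 subrK.
- by move=> k; rewrite /glue; case: split.
- by move=> k; rewrite /glue; case: split.
rewrite big_split_ord !scaler_sumr; congr (_ + _); apply: eq_bigr => k _;
  by rewrite ?glueL ?glueR rmorphM scalerA.
Qed.

Lemma separable_convex (a b : 'M[C]_N) (t : R) :
  separable a -> separable b -> 0 <= t <= 1 ->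
  separable ((1 - t)%:C%C *: a + t%:C%C *: b).
Proof.
move=> /separable_mixtureP [K1 [w1 [A1 [B1 ma]]]].
move=> /separable_mixtureP [K2 [w2 [A2 [B2 mb]]]] t01.
have [w [A [B mab]]] := product_mixture_convex ma mb t01.
by apply/separable_mixtureP; exists (K1 + K2)%N, w, A, B.
Qed.

End ProductMixtures.

Section ComplexContinuity.
Variables (R : realType) (T : topologicalType).
Local Notation C := (R[i]).
Local Notation Re := (@complex.Re R).
Local Notation Im := (@complex.Im R).
Implicit Types (f g : T -> C).

Let eq_continuous (u v : T -> R) : continuous u -> u =1 v -> continuous v.
Proof. by move=> cu /funext <-. Qed.

Let contD (u v : T -> R) :
  continuous u -> continuous v -> continuous (fun x => u x + v x).
Proof. by move=> cu cv x; apply: continuousD; [apply: cu | apply: cv]. Qed.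

Let contN (u : T -> R) : continuous u -> continuous (fun x => - u x).
Proof. by move=> cu x; apply: continuousN; apply: cu. Qed.

Let contM (u v : T -> R) :
  continuous u -> continuous v -> continuous (fun x => u x * v x).
Proof. by move=> cu cv x; apply: continuousM; [apply: cu | apply: cv]. Qed.

Lemma continuous_sum (I : finType) (F : I -> T -> R) :
  (forall i, continuous (F i)) -> continuous (fun x => \sum_i F i x).
Proof. by move=> cF; apply: (continuous_big (P := xpredT) add_continuous) => i _. Qed.

(* [R[i]] carries no topology in the library: continuity is componentwise. *)
Definition cplx_continuous f :=
  continuous (fun x => Re (f x)) /\ continuous (fun x => Im (f x)).

Lemma cplx_continuous_cst (c : C) : cplx_continuous (fun=> c).
Proof. by split; apply: cst_continuous. Qed.

Lemma cplx_continuous_Complex (u v : T -> R) :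
  continuous u -> continuous v -> cplx_continuous (fun x => (u x +i* v x)%C).
Proof. by []. Qed.

Lemma cplx_continuousD f g : cplx_continuous f -> cplx_continuous g ->
  cplx_continuous (fun x => f x + g x).
Proof.
move=> [fRe fIm] [gRe gIm].
by split; [refine (eq_continuous (contD fRe gRe) _) | refine (eq_continuous (contD fIm gIm) _)]
  => x; rewrite raddfD.
Qed.

Lemma cplx_continuousN f : cplx_continuous f -> cplx_continuous (fun x => - f x).
Proof.
move=> [fRe fIm].
by split; [refine (eq_continuous (contN fRe) _) | refine (eq_continuous (contN fIm) _)]
  => x; rewrite raddfN.
Qed.

Lemma cplx_continuousM f g : cplx_continuous f -> cplx_continuous g ->
  cplx_continuous (fun x => f x * g x).
Proof.
move=> [fRe fIm] [gRe gIm]; split.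
  refine (eq_continuous (contD (contM fRe gRe) (contN (contM fIm gIm))) _) => x.
  by case: (f x) (g x) => [a b] [c d].
refine (eq_continuous (contD (contM fRe gIm) (contM fIm gRe)) _) => x.
by case: (f x) (g x) => [a b] [c d].
Qed.

Lemma cplx_continuousJ f : cplx_continuous f -> cplx_continuous (fun x => (f x)^*).
Proof.
move=> [fRe fIm]; split; first by refine (eq_continuous fRe _) => x; case: (f x).
by refine (eq_continuous (contN fIm) _) => x; case: (f x).
Qed.

Lemma cplx_continuous_sum (I : finType) (F : I -> T -> C) :
  (forall i, cplx_continuous (F i)) -> cplx_continuous (fun x => \sum_i F i x).
Proof.
move=> cF; split.
  by refine (eq_continuous (continuous_sum (fun i => (cF i).1)) _) => x; rewrite raddf_sum.
by refine (eq_continuous (continuous_sum (fun i => (cF i).2)) _) => x; rewrite raddf_sum.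
Qed.

Definition mx_continuous p q (F : T -> 'M[C]_(p, q)) :=
  forall i j, cplx_continuous (fun x => F x i j).

Lemma mx_continuous_cst p q (A : 'M[C]_(p, q)) : mx_continuous (fun=> A).
Proof. by move=> i j; apply: cplx_continuous_cst. Qed.

Lemma eq_cplx_continuous f g : cplx_continuous f -> f =1 g -> cplx_continuous g.
Proof. by move=> cf /funext <-. Qed.

Lemma mx_continuousD p q (F G : T -> 'M[C]_(p, q)) :
  mx_continuous F -> mx_continuous G -> mx_continuous (fun x => F x + G x).
Proof.
move=> cF cG i j; apply: eq_cplx_continuous (cplx_continuousD (cF i j) (cG i j)) _.
by move=> x; rewrite mxE.
Qed.

Lemma mx_continuousN p q (F : T -> 'M[C]_(p, q)) :
  mx_continuous F -> mx_continuous (fun x => - F x).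
Proof.
move=> cF i j; apply: eq_cplx_continuous (cplx_continuousN (cF i j)) _.
by move=> x; rewrite mxE.
Qed.

Lemma mx_continuousB p q (F G : T -> 'M[C]_(p, q)) :
  mx_continuous F -> mx_continuous G -> mx_continuous (fun x => F x - G x).
Proof. by move=> cF /mx_continuousN; apply: mx_continuousD. Qed.

Lemma mx_continuousZ p q (a : T -> C) (F : T -> 'M[C]_(p, q)) :
  cplx_continuous a -> mx_continuous F -> mx_continuous (fun x => a x *: F x).
Proof.
move=> ca cF i j; apply: eq_cplx_continuous (cplx_continuousM ca (cF i j)) _.
by move=> x; rewrite mxE.
Qed.

Lemma mx_continuousM p q r (F : T -> 'M[C]_(p, q)) (G : T -> 'M[C]_(q, r)) :
  mx_continuous F -> mx_continuous G -> mx_continuous (fun x => F x *m G x).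
Proof.
move=> cF cG i j.
apply: eq_cplx_continuous
  (cplx_continuous_sum (fun k => cplx_continuousM (cF i k) (cG k j))) _.
by move=> x; rewrite mxE.
Qed.

Lemma mx_continuous_sum p q (I : finType) (F : I -> T -> 'M[C]_(p, q)) :
  (forall k, mx_continuous (F k)) -> mx_continuous (fun x => \sum_k F k x).
Proof.
move=> cF i j; apply: eq_cplx_continuous (cplx_continuous_sum (fun k => cF k i j)) _.
by move=> x; rewrite summxE.
Qed.

Lemma mx_continuousT p q r s (F : T -> 'M[C]_(p, q)) (G : T -> 'M[C]_(r, s)) :
  mx_continuous F -> mx_continuous G -> mx_continuous (fun x => F x *t G x).
Proof.
move=> cF cG i j; apply: eq_cplx_continuous (cplx_continuousM (cF _ _) (cG _ _)) _.
by move=> x; rewrite mxE.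
Qed.

Lemma mx_continuous_adj p q (F : T -> 'M[C]_(p, q)) :
  mx_continuous F -> mx_continuous (fun x => adj (F x)).
Proof.
move=> cF i j; apply: eq_cplx_continuous (cplx_continuousJ (cF j i)) _.
by move=> x; rewrite !mxE.
Qed.

Lemma cplx_continuous_trace p (F : T -> 'M[C]_p) :
  mx_continuous F -> cplx_continuous (fun x => \tr (F x)).
Proof. by move=> cF; apply: cplx_continuous_sum => i; apply: cF. Qed.

End ComplexContinuity.

Section Closedness.
Variables (R : realType) (T : topologicalType).
Local Notation C := (R[i]).
Local Notation Re := (@complex.Re R).
Local Notation Im := (@complex.Im R).

Lemma closed_preimage (u : T -> R) (A : set R) :
  continuous u -> closed A -> closed [set x | A (u x)].
Proof. by move=> cu; apply: preimage_closed => x _; apply: cu. Qed.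

Lemma closed_forall (I : Type) (P : I -> set T) :
  (forall i, closed (P i)) -> closed [set x | forall i, P i x].
Proof.
move=> cP; rewrite (_ : [set x | _] = \bigcap_(i in setT) P i).
  exact: closed_bigI.
by apply/seteqP; split=> x /= Px i //; apply: Px.
Qed.

Lemma closed_cplx_eq0 (f : T -> C) :
  cplx_continuous f -> closed [set x | f x = 0].
Proof.
move=> [fRe fIm].
rewrite (_ : [set x | _] = [set x | Re (f x) = 0] `&` [set x | Im (f x) = 0]).
  exact: closedI (closed_preimage fRe (@closed_eq R 0)) (closed_preimage fIm (@closed_eq R 0)).
apply/seteqP; split=> x /=; first by move->.
by case: (f x) => a b /= [-> ->].
Qed.

Lemma closed_cplx_ge0 (f : T -> C) :
  cplx_continuous f -> closed [set x | 0 <= f x].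
Proof.
move=> [fRe fIm].
rewrite (_ : [set x | _] = [set x | 0 <= Re (f x)] `&` [set x | Im (f x) = 0]).
  exact: closedI (closed_preimage fRe (@closed_ge R 0)) (closed_preimage fIm (@closed_eq R 0)).
apply/seteqP; split=> x /=; rewrite lecE /=; first by case/andP=> /eqP.
by case=> -> ->; rewrite eqxx.
Qed.

Lemma closed_mx_eq0 p q (F : T -> 'M[C]_(p, q)) :
  mx_continuous F -> closed [set x | F x = 0].
Proof.
move=> cF; rewrite (_ : [set x | _] = [set x | forall ij : 'I_p * 'I_q, F x ij.1 ij.2 = 0]).
  by apply: closed_forall => -[i j]; apply: closed_cplx_eq0.
apply/seteqP; split=> x /=; first by move=> -> ij; rewrite mxE.
by move=> F0; apply/matrixP=> i j; rewrite (F0 (i, j)) mxE.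
Qed.

Lemma closed_state p (F : T -> 'M[C]_p) :
  mx_continuous F -> closed [set x | state (F x)].
Proof.
move=> cF.
rewrite (_ : [set x | _] = [set x | adj (F x) - F x = 0] `&`
   [set x | forall v : 'cV_p, 0 <= (adj v *m F x *m v) 0 0] `&`
   [set x | \tr (F x) - 1 = 0]).
  apply: closedI; first apply: closedI.
  - exact/closed_mx_eq0/mx_continuousB/cF/mx_continuous_adj.
  - apply: closed_forall => v; apply: closed_cplx_ge0.
    by apply/mx_continuousM/mx_continuous_cst/mx_continuousM/cF/mx_continuous_cst.
  - by apply/closed_cplx_eq0/cplx_continuousD/cplx_continuousN/cplx_continuous_cst;
      apply: cplx_continuous_trace.
apply/seteqP; split=> x /=.
  by move=> [[hF pF] tF]; rewrite hF tF !subrr.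
by move=> [[/eqP hF pF] /eqP tF]; rewrite !subr_eq0 in hF tF; do !split=> //; apply/eqP.
Qed.

End Closedness.

Section Parametrization.
Variables (R : realType) (m n : nat).
Local Notation C := (R[i]).
Local Notation N := (m * n)%N.
Local Notation L := (mixture_length m n).

(* Coordinates of a mixture of [L] product states: the weights, and the real
   ([false]) and imaginary ([true]) parts of the entries of both factors. *)
Definition param_index :=
  ('I_L + ('I_L * 'I_m * 'I_m * bool) + ('I_L * 'I_n * 'I_n * bool))%type.

Local Notation space := 'rV[R]_#|{: param_index}|.

Definition param_coord (v : space) (x : param_index) : R := v ord0 (enum_rank x).

Definition param_weight v k := param_coord v (inl (inl k)).

Definition param_left v k : 'M[C]_m := \matrix_(i, j)
  (param_coord v (inl (inr (k, i, j, false))) +i*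
   param_coord v (inl (inr (k, i, j, true))))%C.

Definition param_right v k : 'M[C]_n := \matrix_(i, j)
  (param_coord v (inr (k, i, j, false)) +i*
   param_coord v (inr (k, i, j, true)))%C.

Definition param_point v : 'M[C]_N :=
  \sum_k (param_weight v k)%:C%C *: (param_left v k *t param_right v k).

Definition param_domain : set space :=
  [set v | product_mixture (param_weight v) (param_left v) (param_right v) (param_point v)].

Lemma continuous_param_coord {x} : continuous (param_coord ^~ x).
Proof. exact: coord_continuous. Qed.

Lemma mx_continuous_param_left k : mx_continuous (param_left ^~ k).
Proof.
move=> i j; refine (eq_cplx_continuous
  (cplx_continuous_Complex continuous_param_coord continuous_param_coord) _).
by move=> v; rewrite mxE.
Qed.

Lemma mx_continuous_param_right k : mx_continuous (param_right ^~ k).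
Proof.
move=> i j; refine (eq_cplx_continuous
  (cplx_continuous_Complex continuous_param_coord continuous_param_coord) _).
by move=> v; rewrite mxE.
Qed.

Lemma mx_continuous_param_point : mx_continuous param_point.
Proof.
apply: mx_continuous_sum => k; apply: mx_continuousZ.
  by split=> /=; [apply: continuous_param_coord | apply: cst_continuous].
exact: mx_continuousT (mx_continuous_param_left k) (mx_continuous_param_right k).
Qed.

Lemma closed_param_domain : closed param_domain.
Proof.
rewrite (_ : param_domain = [set v | forall k, 0 <= param_weight v k] `&`
   [set v | \sum_k param_weight v k = 1] `&`
   [set v | forall k, state (param_left v k)] `&`
   [set v | forall k, state (param_right v k)]).
  apply: closedI; [apply: closedI; [apply: closedI|]|].
  - apply: closed_forall => k.
    exact: closed_preimage continuous_param_coord (@closed_ge R 0).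
  - apply: closed_preimage (@closed_eq R 1).
    by apply: continuous_sum => k; apply: continuous_param_coord.
  - by apply: closed_forall => k; apply/closed_state/mx_continuous_param_left.
  - by apply: closed_forall => k; apply/closed_state/mx_continuous_param_right.
by apply/seteqP; split=> v /=; [case | move=> [[[]]]].
Qed.

Lemma param_domain_bounded :
  param_domain `<=` [set v | forall c, `[(-1 : R), 1]%classic (v ord0 c)].
Proof.
move=> v [w_ge0 w_sum sA sB _] c /=; rewrite in_itv /=.
rewrite -[c]enum_valK -/(param_coord v _).
case: (enum_val c) => [[k|[[[k i] j] b]]|[[[k i] j] b]].
- have w_le1 : param_weight v k <= 1.
    by rewrite -w_sum (bigD1 k) //= lerDl sumr_ge0.
  by rewrite w_le1 (le_trans _ (w_ge0 k)) ?lerN10.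
- have := state_entry_bound i j (sA k).
  by rewrite mxE; case: b => /= -[].
- have := state_entry_bound i j (sB k).
  by rewrite mxE; case: b => /= -[].
Qed.

Lemma compact_param_domain : compact param_domain.
Proof.
apply: subclosed_compact closed_param_domain _ param_domain_bounded.
exact: (@rV_compact _ _ (fun=> `[(-1 : R), 1]%classic) (fun=> @segment_compact R (-1) 1)).
Qed.

Lemma separable_paramP s :
  separable s <-> exists2 v, param_domain v & param_point v = s.
Proof.
split=> [|[v [w_ge0 w_sum sA sB _] <-]]; last first.
  by apply/separable_mixtureP; exists L, (param_weight v), (param_left v), (param_right v).
move=> /separable_mixtureP [K [w [A [B /product_mixture_resize [w' [A' [B' mix]]]]]]].
pose enc (x : param_index) : R := match x with
  | inl (inl k) => w' k
  | inl (inr (k, i, j, b)) => if b then complex.Im (A' k i j) else complex.Re (A' k i j)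
  | inr (k, i, j, b) => if b then complex.Im (B' k i j) else complex.Re (B' k i j)
  end.
pose v : space := \row_c enc (enum_val c).
have coordE x : param_coord v x = enc x by rewrite /param_coord mxE enum_rankK.
have wE : param_weight v = w' by apply/funext => k; rewrite /param_weight coordE.
have AE : param_left v = A'.
  apply/funext => k; apply/matrixP => i j.
  by rewrite mxE !coordE /=; case: (A' k i j).
have BE : param_right v = B'.
  apply/funext => k; apply/matrixP => i j.
  by rewrite mxE !coordE /=; case: (B' k i j).
have vE : param_point v = s by case: mix => _ _ _ _ ->; rewrite /param_point wE AE BE.
by exists v => //; move: mix; rewrite -vE -wE -AE -BE.
Qed.

End Parametrization.

Lemma ge0_quadratic (R : realFieldType) (a b : R) : 0 <= b ->
  (forall t, 0 < t <= 1 -> 0 <= 2 * t * a + t ^+ 2 * b) -> 0 <= a.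
Proof.
move=> b_ge0 quad_ge0; rewrite leNgt; apply/negP => a_lt0.
have ba_gt0 : 0 < b - a by rewrite subr_gt0 (lt_le_trans a_lt0).
(* At this [t] the quadratic equals [t * a * (1 + t) < 0]. *)
pose t := - a / (b - a).
have t_gt0 : 0 < t by rewrite divr_gt0 // oppr_gt0.
have t_le1 : t <= 1 by rewrite ler_pdivrMr // mul1r; lra.
have tb : t * b = t * a - a.
  by have := divfK (lt0r_neq0 ba_gt0) (- a); rewrite -/t mulrBr; lra.
have := quad_ge0 t; rewrite t_gt0 t_le1 => /(_ isT).
rewrite (_ : 2 * t * a + _ = t * a * (1 + t)).
  by rewrite pmulr_lge0 ?pmulr_rge0 ?addr_gt0 // leNgt a_lt0.
by rewrite expr2 -[t * t * b]mulrA tb; ring.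
Qed.

Section HilbertSchmidt.
Variables (R : realType) (p : nat).
Local Notation C := (R[i]).
Local Notation Re := (@complex.Re R).

Definition hs_dist2 (X Y : 'M[C]_p) : R := Re (\tr ((X - Y) *m (X - Y))).

Lemma Re_mxtrace_sqrDZ (A B : 'M[C]_p) (t : R) :
  Re (\tr ((A + t%:C%C *: B) *m (A + t%:C%C *: B))) =
  Re (\tr (A *m A)) + 2 * t * Re (\tr (A *m B)) + t ^+ 2 * Re (\tr (B *m B)).
Proof.
rewrite mulmxDl !mulmxDr -!scalemxAl -!scalemxAr !mxtraceD !mxtraceZ.
rewrite [\tr (B *m A)]mxtrace_mulC !raddfD /=.
have ReM (a : R) (z : C) : Re (a%:C%C * z) = a * Re z.
  by case: z => x y; rewrite /= mul0r subr0.
by rewrite !ReM; ring.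
Qed.

Lemma ge0_Re_real (z : C) : z \is Num.real -> 0 <= Re z -> 0 <= z.
Proof. by move=> /RRe_real <-; rewrite ler0c. Qed.

End HilbertSchmidt.

Section Separation.
Variables (R : realType) (m n : nat).
Local Notation C := (R[i]).
Local Notation N := (m * n)%N.
Local Notation Re := (@complex.Re R).
Implicit Types sigma s : 'M[C]_N.

Lemma nearest_separable sigma : (exists s, separable s) ->
  exists2 x, separable x & forall s, separable s -> hs_dist2 x sigma <= hs_dist2 s sigma.
Proof.
move=> [s0 /separable_paramP [v0 v0D _]].
pose f v := hs_dist2 (param_point v) sigma.
have f_cont : continuous f.
  have /cplx_continuous_trace [] // : mx_continuous (fun v =>
      (param_point v - sigma) *m (param_point v - sigma)).
  by apply: mx_continuousM; apply: mx_continuousB;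
    [apply: mx_continuous_param_point | apply: mx_continuous_cst
    | apply: mx_continuous_param_point | apply: mx_continuous_cst].
have [v vD v_min] := EVT_min_rV (ex_intro _ v0 v0D) (@compact_param_domain R m n)
  (continuous_subspaceT f_cont).
rewrite inE in vD; exists (param_point v); first by apply/separable_paramP; exists v.
by move=> _ /separable_paramP [u uD <-]; apply: v_min; rewrite inE.
Qed.

Lemma nearest_separable_variational sigma x :
  separable x -> (forall s, separable s -> hs_dist2 x sigma <= hs_dist2 s sigma) ->
  forall s, separable s -> 0 <= Re (\tr ((x - sigma) *m (s - x))).
Proof.
move=> sx x_min s ss.
have hd : hermitian (s - x) by apply: hermitianB; apply: separable_hermitian.
apply: (@ge0_quadratic _ _ (Re (\tr ((s - x) *m (s - x))))).
  by have := mxtrace_mul_self_ge0 hd; rewrite lecE => /andP[].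
move=> t /andP[t_gt0 t_le1].
have := x_min _ (separable_convex sx ss (introT andP (conj (ltW t_gt0) t_le1))).
rewrite /hs_dist2 (_ : (1 - t)%:C%C *: x + t%:C%C *: s = x + t%:C%C *: (s - x)).
  by rewrite addrAC Re_mxtrace_sqrDZ; lra.
by rewrite scalerBr rmorphB /= scalerBl scale1r addrAC addrA.
Qed.

Lemma entangled_witness sigma : entangled sigma ->
  exists W, block_positive W /\ detects W sigma.
Proof.
move=> [[[hsigma _] tr_sigma] nsep].
have [[s0 ss0]|no_sep] := pselect (exists s, separable s); last first.
  exists (- 1%:M); split; last by rewrite /detects mulNmx mul1mx raddfN /= tr_sigma ltrN10.
  by split=> [|s ss]; [apply/hermitianN/hermitian1 | case: no_sep; exists s].
have [x sx x_min] := nearest_separable sigma (ex_intro _ s0 ss0).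
have x_var := nearest_separable_variational sx x_min.
pose w := x - sigma.
have hw : hermitian w by apply: hermitianB => //; apply: separable_hermitian.
have w_neq0 : w != 0 by apply: contraPneq nsep; rewrite /w => /subr0_eq <-.
pose c := \tr (w *m x).
have c_real : c \is Num.real.
  by apply: mxtrace_mul_hermitian_real => //; apply: separable_hermitian.
have tr_shift s : \tr s = 1 -> \tr ((w - c *: 1%:M) *m s) = \tr (w *m s) - c.
  by move=> tr_s; rewrite mulmxBl -scalemxAl mul1mx raddfB /= mxtraceZ tr_s mulr1.
exists (w - c *: 1%:M); split.
  split; first by apply: hermitianB hw (hermitianZ c_real (hermitian1 _ _)).
  move=> s ss; rewrite tr_shift ?(separable_trace ss) // /c -raddfB -mulmxBr.
  apply: ge0_Re_real; last exact: x_var.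
  by apply: mxtrace_mul_hermitian_real => //; apply/hermitianB; apply: separable_hermitian.
rewrite /detects tr_shift // /c -raddfB -mulmxBr -opprB mulmxN raddfN /= oppr_lt0.
exact: mxtrace_mul_self_gt0.
Qed.

End Separation.

Section RealWitnesses.
Variables (R : realType) (m n : nat).
Local Notation M := 'M[R[i]]_(m * n).

Lemma real_EW_detects_conj (W rho : M) : real_EW W -> detects W rho ->
  detects W (mxconj rho) /\ detects W (mxrealpart rho).
Proof.
move=> [_ rW] dW; have dWc : detects W (mxconj rho).
  by rewrite -[W](mxconj_real rW); apply: detects_conj.
by split=> //; apply: detects_realpartr.
Qed.

Lemma EW_detects_real_entangled (W rho : M) :
  EW W -> real_mx rho -> entangled rho -> detects W rho ->
  [/\ EW (mxconj W), EW (mxrealpart W),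
      detects (mxconj W) rho & detects (mxrealpart W) rho].
Proof.
move=> /EW_block_positive bW rr er dW.
have dWc : detects (mxconj W) rho.
  by rewrite -(mxconj_real rr); apply: detects_conj.
have dWr := detects_realpartl dW dWc.
split=> //; apply: block_positive_EW er _ => //.
  exact: block_positive_conj.
exact: block_positive_realpart.
Qed.

Lemma real_EW_detectsP (rho : M) : entangled rho ->
  (exists W : M, real_EW W /\ detects W rho) <->
  (real_mx (mxrealpart rho) /\ entangled (mxrealpart rho)).
Proof.
move=> er; split=> [[W [eW dW]]|[rr er']].
  have [_ dWr] := real_EW_detects_conj eW dW.
  split; first exact: real_mx_realpart.
  split; first exact: state_realpart er.1.
  by move=> /(EW_block_positive eW.1).2; rewrite lt_geF.
have [W0 [bW0 dW0]] := entangled_witness er'.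
have dW0c : detects (mxconj W0) (mxrealpart rho).
  by rewrite -(mxconj_real rr); apply: detects_conj.
have dW := detects_realpartl dW0 dW0c.
have [hW _] := block_positive_realpart bW0.
have hrho : hermitian rho by case: er => -[[]].
exists (mxrealpart W0); split.
  split; last exact: real_mx_realpart.
  exact: block_positive_EW (block_positive_realpart bW0) er' dW.
by rewrite /detects -(mxtrace_mul_realpart (real_mx_realpart W0) hW hrho).
Qed.

End RealWitnesses.

Theorem theorem1 (R : realType) (m n : nat) :
  (* (i), first part *)
  (forall W rho : 'M[R[i]]_(m * n),
     real_EW W -> entangled rho -> detects W rho ->
     detects W (mxconj rho) /\ detects W (mxrealpart rho)) /\
  (* (i), converse part *)
  (forall W rho : 'M[R[i]]_(m * n),
     EW W -> real_mx rho -> entangled rho -> detects W rho ->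
     [/\ EW (mxconj W), EW (mxrealpart W),
         detects (mxconj W) rho & detects (mxrealpart W) rho]) /\
  (* (ii) *)
  (forall rho : 'M[R[i]]_(m * n),
     entangled rho ->
     ((exists W : 'M[R[i]]_(m * n), real_EW W /\ detects W rho) <->
      (real_mx (mxrealpart rho) /\ entangled (mxrealpart rho)))).
Proof.
split=> [W rho eW _|]; first exact: real_EW_detects_conj.
split; [exact: EW_detects_real_entangled | exact: real_EW_detectsP].
Qed.
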